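(* In the fine-grained calculus $\lambda^{dFG}$ (with flow-insensitive references), for all stores $\Sigma,\Sigma'$, expressions $e$, environments $\theta$, labels $pc,\ell$ and raw values $r$: if $\langle\Sigma,e\rangle\Downarrow^{\theta}_{pc}\langle\Sigma',r^{\ell}\rangle$ then $pc\sqsubseteq\ell$.
   Context: Fix a lattice $(\mathcal{L},\sqsubseteq,\sqcup)$ of labels. $\lambda^{dFG}$ has expressions $e::=x\mid\lambda x.e\mid e_1\,e_2\mid()\mid\ell\mid(e_1,e_2)\mid\mathbf{fst}(e)\mid\mathbf{snd}(e)\mid\mathbf{inl}(e)\mid\mathbf{inr}(e)\mid\mathbf{case}(e,x.e_1,x.e_2)\mid\mathbf{getLabel}\mid\mathbf{labelOf}(e)\mid e_1\sqsubseteq^{?}e_2\mid\mathbf{taint}(e_1,e_2)\mid\mathbf{new}(e)\mid\,!e\mid e_1:=e_2\mid\mathbf{labelOfRef}(e)$, raw values $r::=()\mid(x.e,\theta)\mid\mathbf{inl}(v)\mid\mathbf{inr}(v)\mid(v_1,v_2)\mid\ell\mid n_\ell$, values $v::=r^\ell$, environments $\theta$ finite maps from variables to values; $r^{\ell}\sqcup\ell'=r^{\ell\sqcup\ell'}$. A store $\Sigma$ maps each label to a finite list (memory) of raw values; $|M|$, $M[n]$, $M[n\mapsto r]$ denote length, $n$-th entry (from 0) and replacement (append if $n=|M|$). Evaluation $\langle\Sigma,e\rangle\Downarrow^\theta_{pc}\langle\Sigma',v\rangle$ is the least relation closed under (store threaded left to right; ''$e\Downarrow v$'' uses current $\theta,pc$):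 $x\Downarrow\theta(x)\sqcup pc$; $()\Downarrow()^{pc}$; $\ell\Downarrow\ell^{pc}$; $\lambda x.e\Downarrow(x.e,\theta)^{pc}$; $\mathbf{getLabel}\Downarrow pc^{pc}$; $e_1e_2\Downarrow v$ if $e_1\Downarrow(x.e,\theta')^\ell$, $e_2\Downarrow v_2$, and $e$ gives $v$ in $\theta'[x\mapsto v_2]$ at program counter $pc\sqcup\ell$; $\mathbf{inl}(e)\Downarrow\mathbf{inl}(v)^{pc}$, $\mathbf{inr}(e)\Downarrow\mathbf{inr}(v)^{pc}$ if $e\Downarrow v$; $\mathbf{case}(e,x.e_1,x.e_2)\Downarrow v$ if $e\Downarrow\mathbf{inl}(v_1)^\ell$ and $e_1$ gives $v$ in $\theta[x\mapsto v_1]$ at $pc\sqcup\ell$ (symmetrically for $\mathbf{inr}$ and $e_2$); $(e_1,e_2)\Downarrow(v_1,v_2)^{pc}$; if $e\Downarrow(v_1,v_2)^\ell$ then $\mathbf{fst}(e)\Downarrow v_1\sqcup\ell$, $\mathbf{snd}(e)\Downarrow v_2\sqcup\ell$; $\mathbf{labelOf}(e)\Downarrow\ell^\ell$ if $e\Downarrow r^\ell$; if $e_1\Downarrow\ell_1^{\ell_1'}$, $e_2\Downarrow\ell_2^{\ell_2'}$ then $e_1\sqsubseteq^?e_2\Downarrow\mathbf{inl}(()^{pc})^{\ell_1'\sqcup\ell_2'}$ when $\ell_1\sqsubseteq\ell_2$ and $\mathbf{inr}(()^{pc})^{\ell_1'\sqcup\ell_2'}$ otherwise; $\mathbf{taint}(e_1,e_2)\Downarrow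 v$ if $e_1\Downarrow\ell^{\ell'}$, $\ell'\sqsubseteq\ell$, and $e_2$ gives $v$ at program counter $\ell$; $\mathbf{new}(e)\Downarrow(n_\ell)^{pc}$ if $e\Downarrow r^\ell$ with store $\Sigma'$ and $n=|\Sigma'(\ell)|$, final store $\Sigma'[\ell\mapsto\Sigma'(\ell)[n\mapsto r]]$; $!e\Downarrow r^{\ell\sqcup\ell'}$ if $e\Downarrow(n_\ell)^{\ell'}$ with store $\Sigma'$ and $\Sigma'(\ell)[n]=r$; $e_1:=e_2\Downarrow()^{pc}$ if $e_1\Downarrow(n_\ell)^{\ell_1}$, $\ell_1\sqsubseteq\ell$, $e_2\Downarrow r^{\ell_2}$ with store $\Sigma''$, $\ell_2\sqsubseteq\ell$, final store $\Sigma''[\ell\mapsto\Sigma''(\ell)[n\mapsto r]]$; $\mathbf{labelOfRef}(e)\Downarrow\ell^{\ell\sqcup\ell'}$ if $e\Downarrow(n_\ell)^{\ell'}$. *)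

From HB Require Import structures.
From mathcomp Require Import all_boot all_order.
Set Implicit Arguments. Unset Strict Implicit. Unset Printing Implicit Defensive.
Import Order.TTheory.

Definition var := nat.

Section Syntax.
Variable L : Type.

Inductive expr : Type :=
  | EVar : var -> expr
  | ELam : var -> expr -> expr
  | EApp : expr -> expr -> expr
  | EUnit : expr
  | ELabel : L -> expr
  | EPair : expr -> expr -> expr
  | EFst : expr -> expr
  | ESnd : expr -> expr
  | EInl : expr -> expr
  | EInr : expr -> expr
  | ECase : expr -> var -> expr -> var -> expr -> expr
  | EGetLabel : expr
  | ELabelOf : expr -> expr
  | ELeq : expr -> expr -> expr
  | ETaint : expr -> expr -> expr
  | ENew : expr -> expr
  | EDeref : expr -> expr
  | EAssign : expr -> expr -> expr
  | ELabelOfRef : expr -> expr.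

Inductive raw : Type :=
  | RUnit : raw
  | RClos : var -> expr -> seq (var * value) -> raw
  | RInl : value -> raw
  | RInr : value -> raw
  | RPair : value -> value -> raw
  | RLabel : L -> raw
  | RRef : nat -> L -> raw
with value : Type :=
  | Val : raw -> L -> value.

Definition env := seq (var * value).

Fixpoint lookup (θ : env) (x : var) : option value :=
  match θ with
  | [::] => None
  | (y, v) :: θ' => if x == y then Some v else lookup θ' x
  end.

Definition extend (θ : env) (x : var) (v : value) : env := (x, v) :: θ.

End Syntax.

Arguments EVar {L}. Arguments ELam {L}. Arguments EApp {L}. Arguments EUnit {L}.
Arguments ELabel {L}. Arguments EPair {L}. Arguments EFst {L}. Arguments ESnd {L}.
Arguments EInl {L}. Arguments EInr {L}. Arguments ECase {L}. Arguments EGetLabel {L}.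
Arguments ELabelOf {L}. Arguments ELeq {L}. Arguments ETaint {L}. Arguments ENew {L}.
Arguments EDeref {L}. Arguments EAssign {L}. Arguments ELabelOfRef {L}.
Arguments RUnit {L}. Arguments RClos {L}. Arguments RInl {L}. Arguments RInr {L}.
Arguments RPair {L}. Arguments RLabel {L}. Arguments RRef {L}. Arguments Val {L}.

Section Semantics.
Variables (disp : Order.disp_t) (L : latticeType disp).

Local Notation lub := (@Order.join disp L).

Definition join_v (v : value L) (l : L) : value L :=
  let: Val r l0 := v in Val r (lub l0 l).

Definition store := L -> seq (raw L).

(* M[n ↦ r]: replacement if n < |M|, append if n = |M|
   (only used when n <= |M|). *)
Definition mem_upd (M : seq (raw L)) (n : nat) (r : raw L) : seq (raw L) :=
  if n < size M then set_nth RUnit M n r else rcons M r.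

Definition store_upd (S : store) (l : L) (M : seq (raw L)) : store :=
  fun l' => if l' == l then M else S l'.

Inductive eval : env L -> L -> store -> expr L -> store -> value L -> Prop :=
  | ev_var th pc S x v :
      lookup th x = Some v ->
      eval th pc S (EVar x) S (join_v v pc)
  | ev_unit th pc S :
      eval th pc S EUnit S (Val RUnit pc)
  | ev_label th pc S l :
      eval th pc S (ELabel l) S (Val (RLabel l) pc)
  | ev_lam th pc S x e :
      eval th pc S (ELam x e) S (Val (RClos x e th) pc)
  | ev_getlabel th pc S :
      eval th pc S EGetLabel S (Val (RLabel pc) pc)
  | ev_app th pc S1 S2 S3 S4 e1 e2 x e th' l v2 v :
      eval th pc S1 e1 S2 (Val (RClos x e th') l) ->
      eval th pc S2 e2 S3 v2 ->
      eval (extend th' x v2) (lub pc l) S3 e S4 v ->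
      eval th pc S1 (EApp e1 e2) S4 v
  | ev_inl th pc S S' e v :
      eval th pc S e S' v ->
      eval th pc S (EInl e) S' (Val (RInl v) pc)
  | ev_inr th pc S S' e v :
      eval th pc S e S' v ->
      eval th pc S (EInr e) S' (Val (RInr v) pc)
  | ev_case_inl th pc S1 S2 S3 e x e1 y e2 v1 l v :
      eval th pc S1 e S2 (Val (RInl v1) l) ->
      eval (extend th x v1) (lub pc l) S2 e1 S3 v ->
      eval th pc S1 (ECase e x e1 y e2) S3 v
  | ev_case_inr th pc S1 S2 S3 e x e1 y e2 v1 l v :
      eval th pc S1 e S2 (Val (RInr v1) l) ->
      eval (extend th y v1) (lub pc l) S2 e2 S3 v ->
      eval th pc S1 (ECase e x e1 y e2) S3 v
  | ev_pair th pc S1 S2 S3 e1 e2 v1 v2 :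
      eval th pc S1 e1 S2 v1 ->
      eval th pc S2 e2 S3 v2 ->
      eval th pc S1 (EPair e1 e2) S3 (Val (RPair v1 v2) pc)
  | ev_fst th pc S S' e v1 v2 l :
      eval th pc S e S' (Val (RPair v1 v2) l) ->
      eval th pc S (EFst e) S' (join_v v1 l)
  | ev_snd th pc S S' e v1 v2 l :
      eval th pc S e S' (Val (RPair v1 v2) l) ->
      eval th pc S (ESnd e) S' (join_v v2 l)
  | ev_labelof th pc S S' e r l :
      eval th pc S e S' (Val r l) ->
      eval th pc S (ELabelOf e) S' (Val (RLabel l) l)
  | ev_leq_true th pc S1 S2 S3 e1 e2 l1 l1' l2 l2' :
      eval th pc S1 e1 S2 (Val (RLabel l1) l1') ->
      eval th pc S2 e2 S3 (Val (RLabel l2) l2') ->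
      (l1 <= l2)%O ->
      eval th pc S1 (ELeq e1 e2) S3 (Val (RInl (Val RUnit pc)) (lub l1' l2'))
  | ev_leq_false th pc S1 S2 S3 e1 e2 l1 l1' l2 l2' :
      eval th pc S1 e1 S2 (Val (RLabel l1) l1') ->
      eval th pc S2 e2 S3 (Val (RLabel l2) l2') ->
      ~~ (l1 <= l2)%O ->
      eval th pc S1 (ELeq e1 e2) S3 (Val (RInr (Val RUnit pc)) (lub l1' l2'))
  | ev_taint th pc S1 S2 S3 e1 e2 l l' v :
      eval th pc S1 e1 S2 (Val (RLabel l) l') ->
      (l' <= l)%O ->
      eval th l S2 e2 S3 v ->
      eval th pc S1 (ETaint e1 e2) S3 v
  | ev_new th pc S S' e r l :
      eval th pc S e S' (Val r l) ->
      eval th pc S (ENew e) (store_upd S' l (mem_upd (S' l) (size (S' l)) r))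
           (Val (RRef (size (S' l)) l) pc)
  | ev_deref th pc S S' e n l l' :
      eval th pc S e S' (Val (RRef n l) l') ->
      n < size (S' l) ->
      eval th pc S (EDeref e) S' (Val (nth RUnit (S' l) n) (lub l l'))
  | ev_assign th pc S1 S2 S3 e1 e2 n l l1 r l2 :
      eval th pc S1 e1 S2 (Val (RRef n l) l1) ->
      (l1 <= l)%O ->
      eval th pc S2 e2 S3 (Val r l2) ->
      (l2 <= l)%O ->
      n <= size (S3 l) ->
      eval th pc S1 (EAssign e1 e2) (store_upd S3 l (mem_upd (S3 l) n r))
           (Val RUnit pc)
  | ev_labelofref th pc S S' e n l l' :
      eval th pc S e S' (Val (RRef n l) l') ->
      eval th pc S (ELabelOfRef e) S' (Val (RLabel l) (lub l l')).

End Semantics.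

From HB Require Import structures.
From mathcomp Require Import all_boot all_order.
Import Order.TTheory.

(* Every rule either labels its result with pc, raises the label of a result
   computed at the same pc, or returns a result computed at a higher program
   counter: pc ⊔ l for application and case, and for taint(e1, e2) the label l
   with pc ⊑ l' ⊑ l, where the first inequality is the induction hypothesis on
   e1 and the second the rule's side condition. *)

Section PcBelowResult.
Variables (disp : Order.disp_t) (L : latticeType disp).

Definition label_of (v : value L) : L := let: Val _ l := v in l.

Lemma label_of_join_v (v : value L) (l : L) :
  label_of (join_v v l) = (label_of v `|` l)%O.
Proof. by case: v. Qed.

Lemma eval_pc_le_label th pc (S S' : store L) e v :
  eval th pc S e S' v -> (pc <= label_of v)%O.
Proof.
elim=> {th pc S e S' v} //=.
- by move=> th pc S x v _; rewrite label_of_join_v leUr.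
- move=> th pc S1 S2 S3 S4 e1 e2 x e th' l v2 v _ _ _ _ _ pcl_v.
  exact: le_trans (leUl _ _) pcl_v.
- move=> th pc S1 S2 S3 e x e1 y e2 v1 l v _ _ _ pcl_v.
  exact: le_trans (leUl _ _) pcl_v.
- move=> th pc S1 S2 S3 e x e1 y e2 v1 l v _ _ _ pcl_v.
  exact: le_trans (leUl _ _) pcl_v.
- by move=> th pc S S' e v1 v2 l _ pc_l; rewrite label_of_join_v lexUr.
- by move=> th pc S S' e v1 v2 l _ pc_l; rewrite label_of_join_v lexUr.
- by move=> th pc S1 S2 S3 e1 e2 l1 l1' l2 l2' _ pc_l1' *; rewrite lexUl.
- by move=> th pc S1 S2 S3 e1 e2 l1 l1' l2 l2' _ pc_l1' *; rewrite lexUl.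
- move=> th pc S1 S2 S3 e1 e2 l l' v _ pc_l' l'_l _ l_v.
  exact: le_trans (le_trans pc_l' l'_l) l_v.
- by move=> th pc S S' e n l l' _ pc_l' _; rewrite lexUr.
- by move=> th pc S S' e n l l' _ pc_l'; rewrite lexUr.
Qed.

End PcBelowResult.

Theorem mainTheorem7 (disp : Order.disp_t) (L : latticeType disp)
    (S S' : store L) (e : expr L) (th : env L) (pc l : L) (r : raw L) :
  eval th pc S e S' (Val r l) -> (pc <= l)%O.
Proof. exact: eval_pc_le_label. Qed.
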